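(* Let $n\ge0$ and let $A,B$ be induced subgraphs of a graph $G$ such that $A\cup B=G$ and such that for any two vertices $v,w$ of $G$ with $v\notin A$ and $w\notin B$, the distance from $v$ to $w$ is at least $n+1$. Then the square of inclusions \[\begin{array}{ccc} A\cap B&\hookrightarrow&A\\ \downarrow&&\downarrow\\ B&\hookrightarrow&G\end{array}\] is an $n$-skeletal pushout.
   Context: A graph is a set with a reflexive symmetric relation (edges); graph maps preserve the relation. An induced subgraph is a subset of vertices with all edges of $G$ between them. The distance between vertices is the length of a shortest path ($\infty$ if none). The box product $G\square H$ has vertex set $V(G)\times V(H)$ and $(v,w)\sim(v',w')$ iff ($v=v'$, $w\sim w'$) or ($v\sim v'$, $w=w'$); $I_1$ is a single edge. The $1$-nerve $N_1G$ is the cubical set (presheaf on the box category with faces, degeneracies and connections) whose $k$-cubes are graph maps $I_1^{\square k}\to G$. $\operatorname{sk}^n$ of a cubical set is the subobject generated by cubes of dimension $\le n$. A commutative square of graphs is an $n$-skeletal pushout if applying $\operatorname{sk}^n\circ N_1$ yields a pushout square of cubical sets. *)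

From HB Require Import structures.
From mathcomp Require Import all_boot.
From mathcomp Require Import zify.
From Stdlib Require Import FunctionalExtensionality ProofIrrelevance.

Set Implicit Arguments.
Unset Strict Implicit.
Unset Printing Implicit Defensive.

Record graph := Graph {
  vert :> Type;
  adj : vert -> vert -> Prop;
  adj_refl : forall v, adj v v;
  adj_sym : forall v w, adj v w -> adj w v }.

Record gmap (G H : graph) := GMap {
  gfun :> G -> H;
  gfun_adj : forall v w, adj v w -> adj (gfun v) (gfun w) }.

Definition gcomp (G H K : graph) (f : gmap G H) (g : gmap H K) : gmap G K :=
  @GMap G K (fun v => g (f v)) (fun v w e => gfun_adj g (gfun_adj f e)).

Lemma gmap_eq (G H : graph) (f g : gmap G H) : (forall v, f v = g v) -> f = g.
Proof.
case: f => f hf; case: g => g hg /= e.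
have E : f = g by apply: functional_extensionality.
subst g; f_equal; apply: proof_irrelevance.
Qed.

Definition induced (G : graph) (P : G -> Prop) : graph :=
  @Graph {v : G | P v} (fun x y => adj (proj1_sig x) (proj1_sig y))
    (fun x => adj_refl (proj1_sig x)) (fun x y e => adj_sym e).

Definition incl_sub (G : graph) (P Q : G -> Prop) (h : forall v, P v -> Q v) :
  gmap (induced P) (induced Q) :=
  @GMap (induced P) (induced Q)
    (fun x => exist Q (proj1_sig x) (h _ (proj2_sig x))) (fun x y e => e).

Definition incl_top (G : graph) (P : G -> Prop) : gmap (induced P) G :=
  @GMap (induced P) G (fun x => proj1_sig x) (fun x y e => e).

(* walks of length k from v to w; the distance from v to w is the least
   such k (infinity if none), so "dist v w >= d" means every walk has
   length >= d. *)
Inductive walk (G : graph) (v : G) : G -> nat -> Prop :=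
| walk0 : walk v v 0
| walkS : forall u w k, walk v u k -> adj u w -> walk v w k.+1.

Definition dist_ge (G : graph) (v w : G) (d : nat) : Prop :=
  forall k, walk v w k -> d <= k.

(* The cube graphs I_1^{box k}: vertices {0,1}^k, two vertices adjacent
   iff they differ in at most one coordinate (this is the unfolding of
   the iterated box product of the edge I_1).                           *)
Definition cvert (k : nat) := 'I_k -> bool.

Definition cadj k (x y : cvert k) : Prop :=
  forall j1 j2, x j1 <> y j1 -> x j2 <> y j2 -> j1 = j2.

Lemma cadj_refl k (x : cvert k) : cadj x x.
Proof. by move=> j1 j2 []. Qed.

Lemma cadj_sym k (x y : cvert k) : cadj x y -> cadj y x.
Proof. by move=> h j1 j2 e1 e2; apply: h => e; [apply: e1|apply: e2]. Qed.

Definition cube k : graph := @Graph (cvert k) (@cadj k) (@cadj_refl k) (@cadj_sym k).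

(* The box category with connections: objects [1]^k, morphisms the maps
   {0,1}^m -> {0,1}^n generated under composition by faces,
   degeneracies and (both kinds of) connections.                        *)

Definition face k (i : 'I_k.+1) (e : bool) (x : cvert k) : cvert k.+1 :=
  fun j => match unlift i j with Some j' => x j' | None => e end.

Definition degen k (i : 'I_k.+1) (x : cvert k.+1) : cvert k :=
  fun j => x (lift i j).

Definition conn k (i : 'I_k.+1) (e : bool) (x : cvert k.+2) : cvert k.+1 :=
  fun j => if (j < i)%N then x (inord j)
           else if (j == i :> nat) then
             (if e then x (inord i) && x (inord i.+1)
              else x (inord i) || x (inord i.+1))
           else x (inord j.+1).

Inductive isbox : forall m n, (cvert m -> cvert n) -> Prop :=
| box_id n : @isbox n n (fun x => x)
| box_face k (i : 'I_k.+1) (e : bool) : isbox (face i e)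
| box_degen k (i : 'I_k.+1) : isbox (degen i)
| box_conn k (i : 'I_k.+1) (e : bool) : isbox (conn i e)
| box_comp l m n (f : cvert l -> cvert m) (g : cvert m -> cvert n) :
    isbox f -> isbox g -> isbox (fun x => g (f x)).

Record boxmap m n := BoxMap {
  bfun :> cvert m -> cvert n;
  bfun_box : isbox bfun }.

Definition bid n : boxmap n n := BoxMap (box_id n).
Definition bcomp l m n (f : boxmap l m) (g : boxmap m n) : boxmap l n :=
  BoxMap (box_comp (bfun_box f) (bfun_box g)).

Lemma cadj_by m n (f : cvert m -> cvert n) (pre : 'I_m -> option 'I_n) :
  (forall x y j, f x j <> f y j -> exists c, x c <> y c /\ pre c = Some j) ->
  forall x y, cadj x y -> cadj (f x) (f y).
Proof.
move=> H x y hxy j1 j2 d1 d2.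
case: (H _ _ _ d1) => c1 [e1 p1]; case: (H _ _ _ d2) => c2 [e2 p2].
have E := hxy _ _ e1 e2; subst c2; congruence.
Qed.

Lemma conn_adj k (i : 'I_k.+1) e : forall x y, cadj x y -> cadj (conn i e x) (conn i e y).
Proof.
  apply: (@cadj_by _ _ _ (fun c : 'I_k.+2 =>
            Some (inord (if (c <= i)%N then c : nat else (c : nat).-1)))).
  move=> x y j; rewrite /conn.
  have Hj := ltn_ord j; have Hi := ltn_ord i.
  have iK : forall a, a < k.+2 -> ((inord a : 'I_k.+2) : nat) = a by move=> a; exact: inordK.
  have iK' : forall a, a < k.+1 -> ((inord a : 'I_k.+1) : nat) = a by move=> a; exact: inordK.
  case: ltnP => hji.
    move=> d; exists (inord j); split=> //; congr Some; apply: ord_inj.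
    rewrite iK; last lia.
    by rewrite ifT ?iK' //; lia.
  case: eqP => hji'.
    move=> d.
    case Ea : (x (inord i) == y (inord i)).
      move/eqP: Ea => Ea.
      exists (inord i.+1); split.
        by move=> Eb; apply: d; rewrite Ea Eb.
      congr Some; apply: ord_inj; rewrite iK; last lia.
      by rewrite ifF ?iK' //; lia.
    exists (inord i); split; first by move/eqP: Ea.
    congr Some; apply: ord_inj; rewrite iK; last lia.
    by rewrite ifT ?iK' //; lia.
  move=> d; exists (inord j.+1); split=> //; congr Some; apply: ord_inj.
  rewrite iK; last lia.
  by rewrite ifF ?iK' //; lia.
Qed.

Lemma isbox_adj m n (f : cvert m -> cvert n) :
  isbox f -> forall x y, cadj x y -> cadj (f x) (f y).
Proof.
elim=> {m n f}.
- by [].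
- move=> k i e; apply: (@cadj_by _ _ _ (fun c => Some (lift i c))).
  move=> x y j; rewrite /face; case: unliftP => [j' ->|->] d; last by [].
  by exists j'.
- move=> k i; apply: (@cadj_by _ _ _ (unlift i)).
  move=> x y j; rewrite /degen => d; exists (lift i j); split=> //.
  by rewrite liftK.
- move=> k i e; exact: conn_adj.
- move=> l m n f g _ hf _ hg x y h; exact: hg _ _ (hf _ _ h).
Qed.

Definition boxg m n (f : boxmap m n) : gmap (cube m) (cube n) :=
  @GMap (cube m) (cube n) f (isbox_adj (bfun_box f)).

Record cset := CSet {
  cell : nat -> Type;
  cact : forall m n, boxmap m n -> cell n -> cell m;
  cact_id : forall n x, cact (bid n) x = x;
  cact_comp : forall l m n (f : boxmap l m) (g : boxmap m n) x,
      cact (bcomp f g) x = cact f (cact g x) }.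

Unset Implicit Arguments.
Record cmap (X Y : cset) := CMap {
  cfun : forall n, cell X n -> cell Y n;
  cfun_nat : forall m n (f : boxmap m n) x,
      cfun m (@cact X m n f x) = @cact Y m n f (cfun n x) }.
Set Implicit Arguments.
Arguments cfun {X Y} c n x.
Arguments cfun_nat {X Y} c m n f x.

Definition is_pushout (C A B D : cset) (i : cmap C A) (j : cmap C B)
    (p : cmap A D) (q : cmap B D) : Prop :=
  (forall n x, cfun p n (cfun i n x) = cfun q n (cfun j n x)) /\
  forall (Z : cset) (f : cmap A Z) (g : cmap B Z),
    (forall n x, cfun f n (cfun i n x) = cfun g n (cfun j n x)) ->
    exists h : cmap D Z,
      [/\ (forall n x, cfun h n (cfun p n x) = cfun f n x),
          (forall n x, cfun h n (cfun q n x) = cfun g n x) &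
          forall h' : cmap D Z,
            (forall n x, cfun h' n (cfun p n x) = cfun f n x) ->
            (forall n x, cfun h' n (cfun q n x) = cfun g n x) ->
            forall n x, cfun h' n x = cfun h n x].

Definition nerve1 (G : graph) : cset.
refine (@CSet (fun k => gmap (cube k) G)
          (fun m n f c => gcomp (boxg f) c) _ _).
- by move=> n x; apply: gmap_eq.
- by move=> l m n f g x; apply: gmap_eq.
Defined.

Definition nmap (G H : graph) (h : gmap G H) : cmap (nerve1 G) (nerve1 H).
refine (@CMap (nerve1 G) (nerve1 H) (fun k c => gcomp c h) _).
by move=> m n f x; apply: gmap_eq.
Defined.

Lemma sig_eq (T : Type) (P : T -> Prop) (a b : {x : T | P x}) :
  proj1_sig a = proj1_sig b -> a = b.
Proof.
case: a => a ha; case: b => b hb /= E; subst b; f_equal; apply: proof_irrelevance.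
Qed.

Definition skgen (X : cset) (n k : nat) (c : cell X k) : Prop :=
  exists m (f : boxmap k m) (d : cell X m), m <= n /\ c = cact f d.

Lemma skgen_act (X : cset) n m k (g : boxmap m k) (c : cell X k) :
  skgen n c -> skgen n (cact g c).
Proof.
case=> l [f [d [hl ->]]]; exists l, (bcomp g f), d; split=> //.
by rewrite cact_comp.
Qed.

Definition sk (n : nat) (X : cset) : cset.
refine (@CSet (fun k => {c : cell X k | skgen n c})
          (fun m k g c => exist _ (cact g (proj1_sig c))
                                 (skgen_act g (proj2_sig c))) _ _).
- by move=> k c; apply: sig_eq; rewrite /= cact_id.
- by move=> l m k f g c; apply: sig_eq; rewrite /= cact_comp.
Defined.

Lemma skgen_map (X Y : cset) (phi : cmap X Y) n k (c : cell X k) :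
  skgen n c -> skgen n (cfun phi k c).
Proof.
case=> l [f [d [hl ->]]]; exists l, f, (cfun phi l d); split=> //.
by rewrite cfun_nat.
Qed.

Definition skmap (n : nat) (X Y : cset) (phi : cmap X Y) : cmap (sk n X) (sk n Y).
refine (@CMap (sk n X) (sk n Y)
          (fun k c => exist _ (cfun phi k (proj1_sig c))
                            (skgen_map phi (proj2_sig c))) _).
by move=> m k f c; apply: sig_eq; rewrite /= cfun_nat.
Defined.

Definition skN (n : nat) (G H : graph) (h : gmap G H) :
  cmap (sk n (nerve1 G)) (sk n (nerve1 H)) := skmap n (nmap h).

(* Every cube of sk^n N_1 G is a box-map face [d \o f] of a cube [d] of
   dimension m <= n.  Any two vertices of the m-cube are joined by a walk of
   length m, so by the distance hypothesis [d] lies entirely in A or entirely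
   in B.  The image of a box map is a subcube, onto which the m-cube retracts;
   precomposing [d] with this retraction gives a cube of A (or B) with the same
   face [d \o f].  Hence sk^n N_1 G is the union of the subobjects sk^n N_1 A
   and sk^n N_1 B, whose intersection is sk^n N_1 (A /\ B), and in a presheaf
   category the union of two subobjects is their pushout over the
   intersection. *)

From mathcomp Require Import all_boot zify.
From Stdlib Require Import FunctionalExtensionality Classical ClassicalEpsilon.

Set Implicit Arguments.
Unset Strict Implicit.
Unset Printing Implicit Defensive.

Section PushoutOfUnion.

Variables (C A B D : cset) (i : cmap C A) (j : cmap C B).
Variables (p : cmap A D) (q : cmap B D).
Hypothesis p_inj : forall k, injective (cfun p k).
Hypothesis q_inj : forall k, injective (cfun q k).
Hypothesis pq_meet : forall k a b,
  cfun p k a = cfun q k b -> exists c, cfun i k c = a /\ cfun j k c = b.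
Hypothesis pq_cover : forall k d,
  (exists a, cfun p k a = d) \/ (exists b, cfun q k b = d).

Variables (Z : cset) (f : cmap A Z) (g : cmap B Z).
Hypothesis fg_agree : forall k c, cfun f k (cfun i k c) = cfun g k (cfun j k c).

Lemma glue_spec k d : exists z,
  (forall a, cfun p k a = d -> z = cfun f k a) /\
  (forall b, cfun q k b = d -> z = cfun g k b).
Proof.
have agree a b : cfun p k a = cfun q k b -> cfun f k a = cfun g k b.
  by move=> /pq_meet [c [<- <-]]; apply: fg_agree.
case: (pq_cover d) => [[a <-]|[b <-]].
  by exists (cfun f k a); split=> [a' /p_inj -> |b /esym /agree].
by exists (cfun g k b); split=> [a /agree |b' /q_inj ->].
Qed.

Definition glue_fun k d : cell Z k :=
  proj1_sig (constructive_indefinite_description _ (glue_spec d)).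

Lemma glue_fun_p k a : glue_fun (cfun p k a) = cfun f k a.
Proof.
by rewrite /glue_fun; case: constructive_indefinite_description => z [+ _] /=; apply.
Qed.

Lemma glue_fun_q k b : glue_fun (cfun q k b) = cfun g k b.
Proof.
by rewrite /glue_fun; case: constructive_indefinite_description => z [_ +] /=; apply.
Qed.

Lemma glue_fun_nat m k (u : boxmap m k) d :
  glue_fun (cact u d) = cact u (glue_fun d).
Proof.
case: (pq_cover d) => [[a <-]|[b <-]].
  by rewrite -(cfun_nat p) !glue_fun_p cfun_nat.
by rewrite -(cfun_nat q) !glue_fun_q cfun_nat.
Qed.

Definition glue : cmap D Z := CMap D Z (@glue_fun) glue_fun_nat.

Lemma glue_unique (h : cmap D Z) :
  (forall k a, cfun h k (cfun p k a) = cfun f k a) ->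
  (forall k b, cfun h k (cfun q k b) = cfun g k b) ->
  forall k d, cfun h k d = glue_fun d.
Proof.
move=> hp hq k d; case: (pq_cover d) => [[a <-]|[b <-]].
  by rewrite hp glue_fun_p.
by rewrite hq glue_fun_q.
Qed.

End PushoutOfUnion.

Lemma pushout_of_union (C A B D : cset) (i : cmap C A) (j : cmap C B)
    (p : cmap A D) (q : cmap B D) :
  (forall k c, cfun p k (cfun i k c) = cfun q k (cfun j k c)) ->
  (forall k, injective (cfun p k)) -> (forall k, injective (cfun q k)) ->
  (forall k a b, cfun p k a = cfun q k b ->
     exists c, cfun i k c = a /\ cfun j k c = b) ->
  (forall k d, (exists a, cfun p k a = d) \/ (exists b, cfun q k b = d)) ->
  is_pushout i j p q.
Proof.
move=> pq_comm p_inj q_inj pq_meet pq_cover; split=> // Z f g fg_agree.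
exists (glue p_inj q_inj pq_meet pq_cover fg_agree); split=> /=.
- exact: glue_fun_p.
- exact: glue_fun_q.
- exact: glue_unique.
Qed.

Definition subcube m (J b : 'I_m -> bool) (x : cvert m) : Prop :=
  forall j, J j -> x j = b j.

Definition subcube_image m n (g : cvert m -> cvert n) J b J' b' : Prop :=
  (forall x, subcube J b x -> subcube J' b' (g x)) /\
  (forall y, subcube J' b' y -> exists2 x, subcube J b x & g x = y).

Definition subcube_closed m n (g : cvert m -> cvert n) : Prop :=
  forall J b, exists J' b', subcube_image g J b J' b'.

Lemma id_subcube_closed n : subcube_closed (fun x : cvert n => x).
Proof. by move=> J b; exists J, b; split=> // y hy; exists y. Qed.

Lemma comp_subcube_closed l m n (f : cvert l -> cvert m) (g : cvert m -> cvert n) :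
  subcube_closed f -> subcube_closed g -> subcube_closed (fun x => g (f x)).
Proof.
move=> hf hg J b; have [J1 [b1 [f_in f_onto]]] := hf J b.
have [J2 [b2 [g_in g_onto]]] := hg J1 b1.
exists J2, b2; split=> [x /f_in /g_in //|y /g_onto [z /f_onto [x hx <-] <-]].
by exists x.
Qed.

Lemma face_subcube_closed k (i : 'I_k.+1) e : subcube_closed (face i e).
Proof.
move=> J b.
exists (fun j => if unlift i j is Some j' then J j' else true).
exists (fun j => if unlift i j is Some j' then b j' else e).
split=> [x hx j|y hy].
  by rewrite /face; case: (unlift i j) => // j'; apply: hx.
exists (degen i y).
  by move=> j hj; have := hy (lift i j); rewrite liftK; apply.
apply: functional_extensionality => j; rewrite /face /degen.
by case: unliftP => [j' ->|->] //; have := hy i; rewrite unlift_none => ->.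
Qed.

Lemma degen_subcube_closed k (i : 'I_k.+1) : subcube_closed (degen i).
Proof.
move=> J b; exists (fun j => J (lift i j)), (fun j => b (lift i j)).
split=> [x hx j /hx //|y hy].
exists (fun j => if unlift i j is Some j' then y j' else b i).
  by move=> j; case: unliftP => [j' ->|->] // /hy.
by apply: functional_extensionality => j; rewrite /degen liftK.
Qed.

Definition bmerge (e x0 x1 : bool) := if e then x0 && x1 else x0 || x1.

(* The merged coordinate is fixed as soon as both inputs are fixed, or one of
   them is fixed to the absorbing value [~~ e]. *)
Definition merge_fixed (e J0 J1 b0 b1 : bool) :=
  [|| J0 && J1, J0 && (b0 == ~~ e) | J1 && (b1 == ~~ e)].

Lemma bmerge_fixed (e J0 J1 b0 b1 x0 x1 : bool) :
  (J0 -> x0 = b0) -> (J1 -> x1 = b1) -> merge_fixed e J0 J1 b0 b1 ->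
  bmerge e x0 x1 = bmerge e (if J0 then b0 else e) (if J1 then b1 else e).
Proof.
by case: e J0 J1 b0 b1 x0 x1 => [] [] [] [] [] [] [] //= h0 h1; rewrite ?h0 ?h1.
Qed.

Lemma bmerge_free (e J0 J1 b0 b1 y : bool) :
  (merge_fixed e J0 J1 b0 b1 ->
     y = bmerge e (if J0 then b0 else e) (if J1 then b1 else e)) ->
  bmerge e (if J0 then b0 else y) (if J1 then b1 else y) = y.
Proof. by case: e J0 J1 b0 b1 y => [] [] [] [] [] [] //= ->. Qed.

Lemma conn_lift k (i : 'I_k.+1) e (x : cvert k.+2) j :
  conn i e x j = if j == i then bmerge e (x (inord i)) (x (lift (inord i) i))
                 else x (lift (inord i) j).
Proof.
have lift_val (t : 'I_k.+1) :
    lift (inord i) t = inord (if (t < i)%N then t : nat else t.+1) :> 'I_k.+2.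
  have := ltn_ord t; have := ltn_ord i => ? ?; apply: ord_inj.
  by rewrite /= /bump !inordK; [case: ltnP | case: (ltnP t i) => _; lia | lia].
rewrite /conn /bmerge !lift_val ltnn -val_eqE /=.
by case: ltngtP.
Qed.

Lemma conn_subcube_closed k (i : 'I_k.+1) e : subcube_closed (conn i e).
Proof.
move=> J b; set i0 : 'I_k.+2 := inord i; set i1 := lift i0 i.
set fixed := merge_fixed e (J i0) (J i1) (b i0) (b i1).
exists (fun j => if j == i then fixed else J (lift i0 j)).
exists (fun j => if j == i
                 then bmerge e (if J i0 then b i0 else e) (if J i1 then b i1 else e)
                 else b (lift i0 j)).
split=> [x hx j|y hy].
  by rewrite conn_lift; case: eqP => // _; [apply: bmerge_fixed; apply: hx | apply: hx].
exists (fun t => if unlift i0 t is Some t' then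
                   (if t' == i then (if J i1 then b i1 else y i) else y t')
                 else (if J i0 then b i0 else y i)).
  move=> t; case: unliftP => [t' ->|->]; last by move=> ->.
  case: eqP => [->|/eqP ne] hJ; first by rewrite -/i1 hJ.
  by have := hy t'; rewrite (negbTE ne); apply.
apply: functional_extensionality => j; rewrite conn_lift !liftK unlift_none.
case: eqP => [->|_] //; rewrite eqxx.
by apply: bmerge_free; have := hy i; rewrite eqxx.
Qed.

Lemma isbox_subcube_closed m n (g : cvert m -> cvert n) : isbox g -> subcube_closed g.
Proof.
elim=> {m n g}.
- exact: id_subcube_closed.
- exact: face_subcube_closed.
- exact: degen_subcube_closed.
- exact: conn_subcube_closed.
- by move=> l m n f g _ hf _ hg; apply: comp_subcube_closed.
Qed.

Definition subcube_proj m (J b : 'I_m -> bool) (y : cvert m) : cvert m :=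
  fun j => if J j then b j else y j.

Lemma subcube_proj_adj m (J b : 'I_m -> bool) (x y : cube m) :
  adj x y -> adj (subcube_proj J b x : cube m) (subcube_proj J b y).
Proof.
move=> hxy j1 j2; rewrite /subcube_proj.
by case: (J j1) => // e1; case: (J j2) => // e2; apply: hxy e1 e2.
Qed.

Definition subcube_projg m (J b : 'I_m -> bool) : gmap (cube m) (cube m) :=
  GMap (@subcube_proj_adj m J b).

Lemma subcube_proj_in m (J b : 'I_m -> bool) y : subcube J b (subcube_proj J b y).
Proof. by move=> j; rewrite /subcube_proj => ->. Qed.

Lemma subcube_proj_id m (J b : 'I_m -> bool) x :
  subcube J b x -> subcube_proj J b x = x.
Proof.
move=> hx; apply: functional_extensionality => j; rewrite /subcube_proj.
by case: ifP => // /hx.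
Qed.

Lemma box_retract k m (f : boxmap k m) : exists rho : gmap (cube m) (cube m),
  (forall x, rho (f x) = f x) /\ (forall y, exists x, rho y = f x).
Proof.
have [J [b [f_in f_onto]]] :=
  isbox_subcube_closed (bfun_box f) (fun _ => false) (fun _ => false).
exists (subcube_projg J b); split=> [x|y] /=.
  by apply: subcube_proj_id; apply: f_in.
by have [x _ <-] := f_onto _ (@subcube_proj_in m J b y); exists x.
Qed.

Lemma walk_map (G H : graph) (h : gmap G H) (v w : G) k :
  walk v w k -> walk (h v) (h w) k.
Proof.
elim=> {w k} [|u w k _ IH e]; first exact: walk0.
by apply: walkS IH _; apply: gfun_adj.
Qed.

(* Flip the coordinates of [x] to those of [y] one at a time. *)
Lemma walk_cube m (x y : cube m) : walk x y m.
Proof.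
pose z t : cube m := fun j => if (j < t)%N then y j else x j.
have walk_z t : walk x (z t) t.
  elim: t => [|t IH].
    have -> : z 0 = x by apply: functional_extensionality.
    exact: walk0.
  apply: walkS IH _ => j1 j2; rewrite /z.
  have flip (j : 'I_m) : (if (j < t)%N then y j else x j) <>
      (if (j < t.+1)%N then y j else x j) -> (j : nat) = t.
    by case: ifP; case: ifP => // *; lia.
  by move=> /flip h1 /flip h2; apply: ord_inj; rewrite h1 h2.
have -> : y = z m by apply: functional_extensionality => j; rewrite /z ltn_ord.
exact: walk_z.
Qed.

Lemma small_cube_in_A_or_B (G : graph) (A B : G -> Prop) n
    (hdist : forall v w : G, ~ A v -> ~ B w -> dist_ge v w n.+1)
    m (d : gmap (cube m) G) :
  m <= n -> (forall y, A (d y)) \/ (forall y, B (d y)).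
Proof.
move=> hm; case: (classic (forall y, A (d y))) => [|/not_all_ex_not [y0 hy0]].
  by left.
right=> y; apply: NNPP => hy.
by have := hdist _ _ hy0 hy m (walk_map d (walk_cube y0 y)); lia.
Qed.

Lemma sk_nerve_lift (G : graph) (P : G -> Prop) n k (c : cell (sk n (nerve1 G)) k) :
  (forall x, P (proj1_sig c x)) -> exists c', cfun (skN n (incl_top P)) k c' = c.
Proof.
case: c => c [m [f [d [hm E]]]] /= hP.
have [rho [rho_f rho_onto]] := box_retract f.
have c_df x : c x = d (f x) by rewrite E.
have hd y : P (d (rho y)) by have [x ->] := rho_onto y; rewrite -c_df.
pose dP := @GMap (cube m) (induced P) (fun y => exist P (d (rho y)) (hd y))
             (fun y1 y2 e => gfun_adj d (gfun_adj rho e)).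
have gen : skgen (X := nerve1 (induced P)) n (gcomp (boxg f) dP) by exists m, f, dP.
exists (exist _ _ gen); apply: sig_eq; apply: gmap_eq => x /=.
by rewrite rho_f c_df.
Qed.

Lemma skN_incl_top_inj n (G : graph) (P : G -> Prop) k :
  injective (cfun (skN n (incl_top P)) k).
Proof.
move=> [a ha] [a' ha'] E; apply: sig_eq; apply: gmap_eq => x; apply: sig_eq.
exact: (f_equal (fun c => gfun (proj1_sig c) x) E).
Qed.

Lemma skN_incl_top_meet n (G : graph) (A B : G -> Prop) k a b :
  cfun (skN n (incl_top A)) k a = cfun (skN n (incl_top B)) k b ->
  exists c,
    cfun (skN n (incl_sub (fun (v : G) (h : A v /\ B v) => proj1 h))) k c = a /\
    cfun (skN n (incl_sub (fun (v : G) (h : A v /\ B v) => proj2 h))) k c = b.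
Proof.
move=> E.
have AB x : A (proj1_sig (cfun (skN n (incl_top A)) k a) x) /\
            B (proj1_sig (cfun (skN n (incl_top A)) k a) x).
  split; first exact: proj2_sig (proj1_sig a x).
  by rewrite E; exact: proj2_sig (proj1_sig b x).
have [c hc] := sk_nerve_lift (P := fun v => A v /\ B v) AB; exists c.
split; apply: skN_incl_top_inj; [rewrite -hc | rewrite -E -hc];
  by apply: sig_eq; apply: gmap_eq.
Qed.

Lemma sk_nerve_cover (G : graph) (A B : G -> Prop) n
    (hdist : forall v w : G, ~ A v -> ~ B w -> dist_ge v w n.+1)
    k (c : cell (sk n (nerve1 G)) k) :
  (exists a, cfun (skN n (incl_top A)) k a = c) \/
  (exists b, cfun (skN n (incl_top B)) k b = c).
Proof.
have [m [f [d [hm E]]]] := proj2_sig c.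
by have [hd|hd] := small_cube_in_A_or_B hdist d hm; [left|right];
  apply: sk_nerve_lift => x; rewrite E; apply: hd.
Qed.

Theorem corollary2p8 (n : nat) (G : graph) (A B : G -> Prop)
  (hcov : forall v : G, A v \/ B v)
  (hdist : forall v w : G, ~ A v -> ~ B w -> dist_ge v w n.+1) :
  is_pushout
    (skN n (incl_sub (fun (v : G) (h : A v /\ B v) => proj1 h)))
    (skN n (incl_sub (fun (v : G) (h : A v /\ B v) => proj2 h)))
    (skN n (incl_top A))
    (skN n (incl_top B)).
Proof.
(* [hcov] is not needed: it is the case [v = w] of [hdist]. *)
apply: pushout_of_union.
- by move=> k c; apply: sig_eq; apply: gmap_eq.
- exact: skN_incl_top_inj.
- exact: skN_incl_top_inj.
- exact: skN_incl_top_meet.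
- exact: sk_nerve_cover hdist.
Qed.
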